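(* Let $G$ be a nonabelian torsion-free nilpotent group with an involution $\ast$. Then $G$ contains a $\ast$-invariant Heisenberg subgroup; more precisely, there exist $x,y\in G$ such that $[x,y]\neq1$, $[x,[x,y]]=[y,[x,y]]=1$, $x^\ast\in\{x,x^{-1}\}$ and $y^\ast\in\{y,y^{-1}\}$.
   Context: An involution on a group is an anti-automorphism of order $2$. Commutators are $[x,y]=x^{-1}y^{-1}xy$. *)

(* the group is an arbitrary (possibly infinite)
   group given by its carrier and operations, since MathComp groups are finite
   and a nontrivial torsion-free group is infinite. *)
From Stdlib Require Import Arith.

Section GroupDefs.
Context {G : Type} (mul : G -> G -> G) (inv : G -> G) (one : G).

Definition is_group : Prop :=
  (forall x y z, mul x (mul y z) = mul (mul x y) z) /\
  (forall x, mul one x = x) /\ (forall x, mul x one = x) /\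
  (forall x, mul (inv x) x = one) /\ (forall x, mul x (inv x) = one).

Definition comm (x y : G) : G := mul (mul (mul (inv x) (inv y)) x) y.

Fixpoint gpow (x : G) (n : nat) : G :=
  match n with 0 => one | S k => mul x (gpow x k) end.

Fixpoint upper_central (n : nat) : G -> Prop :=
  match n with
  | 0 => fun x => x = one
  | S k => fun x => forall y, upper_central k (comm x y)
  end.

Definition nilpotent : Prop := exists n, forall x, upper_central n x.

Definition torsion_free : Prop :=
  forall x n, gpow x (S n) = one -> x = one.

Definition nonabelian : Prop := exists x y, mul x y <> mul y x.

Definition involution (star : G -> G) : Prop :=
  (forall x y, star (mul x y) = mul (star y) (star x)) /\
  (forall x, star (star x) = x).

End GroupDefs.

(* sigma x := star(x)^-1 is an automorphism of order 2, and star x is x or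
   x^-1 exactly when sigma x is x^-1 or x.  Take a in the second centre and g
   with [a,g] <> 1; both u |-> [u,g] on Z_2 and u |-> [x,u] (for x in Z_2) are
   homomorphisms psi into the centre.  Given u with psi u <> 1, either
   psi u psi (sigma u) = 1, and then w = u star(u) is star-fixed with
   psi w = (psi u)^2 <> 1 by torsion-freeness; or psi u psi (sigma u) <> 1, and
   then the iterates of u |-> u sigma(u) keep psi nontrivial while the defect
   u^-1 sigma(u) descends the upper central series, so some iterate w has
   sigma w = w.  Applying this first to a, then to g, gives x and y. *)
From Stdlib Require Import Arith Classical.

Section Involution.
Context {G : Type} {mul : G -> G -> G} {inv : G -> G} {one : G}.
Hypothesis Hg : is_group mul inv one.

Local Notation "x ** y" := (mul x y) (at level 40, left associativity).
Local Notation "[ x , y ]" := (comm mul inv x y).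
Local Notation Z := (upper_central mul inv one).

Lemma mulgA x y z : (x ** y) ** z = x ** (y ** z).
Proof. destruct Hg as [A _]. now rewrite A. Qed.
Lemma mul1g x : one ** x = x. Proof. apply Hg. Qed.
Lemma mulg1 x : x ** one = x. Proof. apply Hg. Qed.
Lemma mulVg x : inv x ** x = one. Proof. apply Hg. Qed.
Lemma mulgV x : x ** inv x = one. Proof. apply Hg. Qed.
Lemma mulKg x y : inv x ** (x ** y) = y.
Proof. now rewrite <- mulgA, mulVg, mul1g. Qed.
Lemma mulKVg x y : x ** (inv x ** y) = y.
Proof. now rewrite <- mulgA, mulgV, mul1g. Qed.
Lemma mulgI a x y : a ** x = a ** y -> x = y.
Proof. intro E. now rewrite <- (mulKg a x), <- (mulKg a y), E. Qed.
Lemma mulIg a x y : x ** a = y ** a -> x = y.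
Proof. intro E. now rewrite <- (mulg1 x), <- (mulg1 y), <- (mulgV a), <- !mulgA, E. Qed.
Lemma invg_unique x y : x ** y = one -> y = inv x.
Proof. intro E. apply (mulgI x). now rewrite E, mulgV. Qed.
Lemma invgK x : inv (inv x) = x.
Proof. symmetry. apply invg_unique, mulVg. Qed.
Lemma invMg x y : inv (x ** y) = inv y ** inv x.
Proof. symmetry. apply invg_unique. rewrite mulgA, mulKVg. apply mulgV. Qed.
Lemma invg1 : inv one = one.
Proof. symmetry. apply invg_unique, mul1g. Qed.
Lemma divg_eq1 a b : a ** inv b = one -> a = b.
Proof. intro E. apply (mulIg (inv b)). now rewrite E, mulgV. Qed.

Ltac group_simpl := repeat progress (rewrite ?mulgA, ?invMg, ?invgK, ?invg1,
  ?mul1g, ?mulg1, ?mulVg, ?mulgV, ?mulKg, ?mulKVg).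

Lemma comm_eq1 x y : [x, y] = one <-> x ** y = y ** x.
Proof.
  unfold comm. split; intro E.
  - apply (mulgI (inv (y ** x))). rewrite mulVg, <- E. group_simpl. reflexivity.
  - rewrite !mulgA, E. group_simpl. reflexivity.
Qed.

Lemma commMg a b h : [a ** b, h] = inv b ** [a, h] ** b ** [b, h].
Proof. unfold comm. group_simpl. reflexivity. Qed.
Lemma commgM x u v : [x, u ** v] = [x, v] ** inv v ** [x, u] ** v.
Proof. unfold comm. group_simpl. reflexivity. Qed.

Definition central c := forall h, c ** h = h ** c.

Lemma comm_central x c : central c -> [x, c] = one.
Proof. intro C. apply comm_eq1. symmetry. apply C. Qed.

Lemma central_mul a b : central a -> central b -> central (a ** b).
Proof. intros A B h. rewrite mulgA, B, <- mulgA, A. apply mulgA. Qed.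

Lemma central_inv a : central a -> central (inv a).
Proof.
  intros A h. apply (mulgI a).
  rewrite <- mulgA, mulgV, mul1g, <- mulgA, A, mulgA, mulgV, mulg1. reflexivity.
Qed.

Definition second_center a := forall h, central [a, h].

Lemma upper_central1 x : Z 1 x <-> central x.
Proof. split; intros H y; apply comm_eq1, H. Qed.

Lemma second_center_commMg a b h :
  second_center a -> [a ** b, h] = [a, h] ** [b, h].
Proof. intro A. rewrite commMg, (mulgA (inv b)), A. group_simpl. reflexivity. Qed.

Lemma second_center_commgM x u v :
  second_center x -> [x, u ** v] = [x, u] ** [x, v].
Proof. intro A. rewrite commgM, !mulgA, (A u v), mulKg. apply A. Qed.

Lemma second_center_mul a b :
  second_center a -> second_center b -> second_center (a ** b).
Proof. intros A B h. rewrite second_center_commMg by exact A. now apply central_mul. Qed.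

Lemma second_center_inv a : second_center a -> second_center (inv a).
Proof.
  intros A h.
  assert (E : [inv a, h] = inv [a, h]).
  { apply invg_unique. rewrite <- second_center_commMg by exact A.
    rewrite mulgV. unfold comm. group_simpl. reflexivity. }
  rewrite E. apply central_inv, A.
Qed.

Lemma upper_central_collapse :
  (forall x, second_center x -> central x) ->
  forall k x, Z (S k) x -> central x.
Proof.
  intros H21 k. induction k as [|k IH]; intros x Hx.
  - now apply upper_central1.
  - apply H21. intro y. exact (IH _ (Hx y)).
Qed.

Lemma exists_noncentral_second_center :
  nilpotent mul inv one -> nonabelian mul ->
  exists a g, second_center a /\ [a, g] <> one.
Proof.
  intros [n Hn] [x0 [y0 Hxy]]. apply NNPP. intro Hno.
  assert (H21 : forall x, second_center x -> central x).
  { intros x Hx y. apply comm_eq1, NNPP. intro Hc. apply Hno. now exists x, y. }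
  apply Hxy. destruct n as [|n].
  - now rewrite (Hn x0), (Hn y0).
  - exact (upper_central_collapse H21 n x0 (Hn x0) y0).
Qed.

Context {star : G -> G}.
Hypothesis Hs : involution mul star.

Lemma star_mul x y : star (x ** y) = star y ** star x. Proof. apply Hs. Qed.
Lemma starK x : star (star x) = x. Proof. apply Hs. Qed.
Lemma star1 : star one = one.
Proof. apply (mulIg (star one)). now rewrite <- star_mul, !mul1g. Qed.
Lemma star_inv x : star (inv x) = inv (star x).
Proof. apply invg_unique. now rewrite <- star_mul, mulVg, star1. Qed.

Definition sigma x := inv (star x).

Lemma sigmaM x y : sigma (x ** y) = sigma x ** sigma y.
Proof. unfold sigma. now rewrite star_mul, invMg. Qed.
Lemma sigmaK x : sigma (sigma x) = x.
Proof. unfold sigma. now rewrite star_inv, invgK, starK. Qed.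
Lemma sigmaV x : sigma (inv x) = inv (sigma x).
Proof. unfold sigma. now rewrite star_inv. Qed.
Lemma sigma_comm x y : sigma [x, y] = [sigma x, sigma y].
Proof. unfold comm. now rewrite !sigmaM, !sigmaV. Qed.

Lemma central_sigma c : central c -> central (sigma c).
Proof. intros C h. rewrite <- (sigmaK h), <- !sigmaM. now rewrite C. Qed.

Lemma second_center_sigma a : second_center a -> second_center (sigma a).
Proof. intros A h. rewrite <- (sigmaK h), <- sigma_comm. apply central_sigma, A. Qed.

Definition twist u := u ** sigma u.
Definition sigma_defect u := inv u ** sigma u.

Lemma sigma_defect_twist u : sigma_defect (twist u) = [sigma_defect u, u].
Proof.
  unfold sigma_defect, twist, comm. rewrite sigmaM, sigmaK.
  generalize (sigma u). intro s. group_simpl. reflexivity.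
Qed.

Lemma sigma_defect_eq1 w : sigma_defect w = one -> star w = inv w.
Proof.
  unfold sigma_defect, sigma. intro E. apply invg_unique in E.
  now rewrite <- (invgK (star w)), E, invgK.
Qed.

(* Each twist moves the defect one step down the upper central series. *)
Lemma sigma_defect_twist_iter j u :
  Z j (sigma_defect u) -> sigma_defect (Nat.iter (S j) twist u) = one.
Proof.
  revert u. induction j as [|j IH]; intros u H.
  - simpl in H |- *. rewrite sigma_defect_twist, H.
    unfold comm. group_simpl. reflexivity.
  - rewrite Nat.iter_succ_r. apply IH. rewrite sigma_defect_twist. apply H.
Qed.

Hypothesis Htf : torsion_free mul one.

Lemma square_neq1 p : p <> one -> p ** p <> one.
Proof. intros H E. apply H, (Htf p 1). simpl. now rewrite mulg1. Qed.

Hypothesis Hnil : nilpotent mul inv one.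

Section StableWitness.
Variable P : G -> Prop.
Variable psi : G -> G.
Hypothesis P_mul : forall u v, P u -> P v -> P (u ** v).
Hypothesis P_inv : forall u, P u -> P (inv u).
Hypothesis P_sigma : forall u, P u -> P (sigma u).
Hypothesis psi_mul : forall u v, P u -> P v -> psi (u ** v) = psi u ** psi v.
Hypothesis psi_central : forall u, P u -> central (psi u).

Lemma P_star u : P u -> P (star u).
Proof. intro Pu. rewrite <- (invgK (star u)). fold (sigma u). auto. Qed.

Lemma psi_star u : P u -> psi (star u) = inv (psi (sigma u)).
Proof.
  intro Pu. apply invg_unique.
  assert (P1 : P one) by (rewrite <- (mulgV u); auto).
  assert (E1 : psi one = one).
  { apply (mulgI (psi one)). rewrite <- psi_mul by exact P1. now rewrite !mulg1. }
  rewrite <- psi_mul by auto using P_star. unfold sigma. now rewrite mulVg.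
Qed.

Lemma psi_norm_neq1 u : P u -> psi u <> one -> psi u ** psi (sigma u) = one ->
  psi (u ** star u) <> one.
Proof.
  intros Pu Hu Hp. rewrite psi_mul, psi_star by auto using P_star.
  intro E. apply divg_eq1 in E. rewrite <- E in Hp. exact (square_neq1 _ Hu Hp).
Qed.

(* The invariant psi u * psi (sigma u) <> 1 squares under twisting. *)
Lemma psi_twist_iter_neq1 k u : P u -> psi u ** psi (sigma u) <> one ->
  psi (Nat.iter (S k) twist u) <> one.
Proof.
  revert u. induction k as [|k IH]; intros u Pu H.
  - simpl. unfold twist. now rewrite psi_mul by auto.
  - rewrite Nat.iter_succ_r. apply IH; unfold twist; [auto|].
    rewrite sigmaM, sigmaK, !psi_mul by auto.
    rewrite (psi_central (sigma u) (P_sigma u Pu) (psi u)). now apply square_neq1.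
Qed.

Lemma P_twist_iter k u : P u -> P (Nat.iter k twist u).
Proof.
  intro Pu. induction k as [|k IH]; [exact Pu|].
  rewrite Nat.iter_succ. unfold twist. auto.
Qed.

Lemma exists_star_stable u : P u -> psi u <> one ->
  exists w, P w /\ psi w <> one /\ (star w = w \/ star w = inv w).
Proof.
  intros Pu Hu. destruct Hnil as [n Hn].
  destruct (classic (psi u ** psi (sigma u) = one)) as [Hp|Hp].
  - exists (u ** star u). repeat split.
    + auto using P_star.
    + now apply psi_norm_neq1.
    + left. now rewrite star_mul, starK.
  - exists (Nat.iter (S n) twist u). repeat split.
    + now apply P_twist_iter.
    + now apply psi_twist_iter_neq1.
    + right. apply sigma_defect_eq1, sigma_defect_twist_iter, Hn.
Qed.

End StableWitness.

Lemma exists_star_stable_second_center a g :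
  second_center a -> [a, g] <> one ->
  exists x, second_center x /\ [x, g] <> one /\ (star x = x \/ star x = inv x).
Proof.
  apply (exists_star_stable second_center (fun u => [u, g])).
  - exact second_center_mul.
  - exact second_center_inv.
  - exact second_center_sigma.
  - intros u v Pu _. now apply second_center_commMg.
  - intros u Pu. apply Pu.
Qed.

Lemma exists_star_stable_partner x g :
  second_center x -> [x, g] <> one ->
  exists y, [x, y] <> one /\ (star y = y \/ star y = inv y).
Proof.
  intros Zx Hxg.
  destruct (exists_star_stable (fun _ => True) (fun u => [x, u])) with (u := g)
    as [y [_ Hy]]; auto.
  - intros u v _ _. now apply second_center_commgM.
  - now exists y.
Qed.

End Involution.

Theorem proposition2p4 (G : Type) (mul : G -> G -> G) (inv : G -> G) (one : G)
  (star : G -> G) :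
  is_group mul inv one ->
  nilpotent mul inv one ->
  torsion_free mul one ->
  nonabelian mul ->
  involution mul star ->
  exists x y : G,
    comm mul inv x y <> one /\
    comm mul inv x (comm mul inv x y) = one /\
    comm mul inv y (comm mul inv x y) = one /\
    (star x = x \/ star x = inv x) /\
    (star y = y \/ star y = inv y).
Proof.
  intros Hg Hnil Htf Hna Hs.
  destruct (exists_noncentral_second_center Hg Hnil Hna) as (a & g & Za & Hag).
  destruct (exists_star_stable_second_center Hg Hs Htf Hnil a g Za Hag)
    as (x & Zx & Hxg & Hx).
  destruct (exists_star_stable_partner Hg Hs Htf Hnil x g Zx Hxg) as (y & Hxy & Hy).
  exists x, y. repeat split; auto; apply (comm_central Hg), Zx.
Qed.
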